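(* There is an absolute constant $c>0$ such that for every integer $\ell\ge1$, all $n\le m$ and every $X=(x_1,\dots,x_m)\in[n]^m$, $\min_T \ell\text{-DistTree}_T(X)\le c\cdot\mathsf{UB}^{\ell}(X)$, the minimum being over all BSTs $T$ on $[n]$.
   Context: $\log(x)=\log_2(\max\{2,x\})$. For a BST $T$ on $[n]$ with root $r$, let $d_T(a,b)$ be the number of edges between $a$ and $b$ in $T$, set $x_0=r$, and define $\ell\text{-DistTree}_T(X)=\sum_{i=1}^m\min_{j\in[i-\ell,i),\,j\ge0}\{d_T(x_i,x_j)+1\}$. $\mathsf{UB}^{\ell}(X)=\sum_{t=1}^m\min_{t'\in[t-\ell,t),\,t'\ge1}\log\big(|x_t-x_{t'}|+\rho_t(x_{t'})\big)$, where $\rho_t(a)$ is the number of distinct keys accessed strictly between the last time $s<t$ with $x_s=a$ and time $t$ (all keys considered accessed at time $0$), and the term for $t=1$ (empty range) is interpreted as $\log n$. *)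

From Stdlib Require Import Reals.
From mathcomp Require Import all_boot.
Set Implicit Arguments. Unset Strict Implicit. Unset Printing Implicit Defensive.

Definition logm (x : R) : R := Rdiv (ln (Rmax (INR 2) x)) (ln (INR 2)).

Inductive tree := Leaf | Node of tree & nat & tree.

Fixpoint inorder (t : tree) : seq nat :=
  match t with Leaf => [::] | Node l k r => inorder l ++ k :: inorder r end.

(* T is a BST on [n] = {1,...,n}: its in-order traversal is 1,2,...,n
   (strictly increasing, so keys are distinct and the BST property holds). *)
Definition is_bst_on (n : nat) (t : tree) : Prop := inorder t = iota 1 n.

Definition root (t : tree) : nat := if t is Node _ k _ then k else 0.

(* list of keys on the root-to-a path (inclusive); [::] if a is not in t *)
Fixpoint anc (t : tree) (a : nat) : seq nat :=
  match t with
  | Leaf => [::]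
  | Node l k r =>
      if k == a then [:: k]
      else if a \in inorder l then k :: anc l a
      else if a \in inorder r then k :: anc r a
      else [::]
  end.

Fixpoint lcp (s1 s2 : seq nat) : nat :=
  match s1, s2 with
  | x :: s1', y :: s2' => if x == y then (lcp s1' s2').+1 else 0
  | _, _ => 0
  end.

Definition dT (t : tree) (a b : nat) : nat :=
  size (anc t a) + size (anc t b) - 2 * lcp (anc t a) (anc t b).

Definition nmin (s : seq nat) : nat := foldr minn (head 0 s) s.
Definition rmin (s : seq R) : R := foldr Rmin (head R0 s) s.

(* access sequence X = (x_1,...,x_m) stored as a seq; x_i = nth 0 X (i-1) *)
Definition acc (X : seq nat) (i : nat) : nat := nth 0 X i.-1.

Definition xt (t : tree) (X : seq nat) (i : nat) : nat :=
  if i == 0 then root t else acc X i.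

(* l-DistTree_T(X) = sum_{i=1}^m min_{j in [i-l,i), j>=0} (d_T(x_i,x_j)+1) *)
Definition DistTree (l : nat) (t : tree) (X : seq nat) : nat :=
  \sum_(1 <= i < (size X).+1)
     nmin [seq (dT t (xt t X i) (xt t X j)).+1 | j <- iota (i - l) (i - (i - l))].

(* last time s < t with x_s = a (0 if none: all keys accessed at time 0) *)
Definition last_acc (X : seq nat) (t a : nat) : nat :=
  \max_(1 <= s < t | acc X s == a) s.

Definition rho (X : seq nat) (t a : nat) : nat :=
  let s := last_acc X t a in
  size (undup [seq acc X u | u <- iota s.+1 (t.-1 - s)]).

Definition absdiff (a b : nat) : nat := (a - b) + (b - a).

(* UB^l(X); the t = 1 term (empty range) is log n *)
Definition UB (l n : nat) (X : seq nat) : R :=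
  \big[Rplus/R0]_(1 <= t < (size X).+1)
    (if t == 1 then logm (INR n)
     else rmin [seq logm (INR (absdiff (acc X t) (acc X t') + rho X t (acc X t')))
               | t' <- iota (maxn 1 (t - l)) (t - maxn 1 (t - l))]).

From Pilot Require Import Defs.
From Stdlib Require Import Reals Lia Lra Classical Wf_nat.
From mathcomp Require Import all_boot zify.
Set Implicit Arguments. Unset Strict Implicit. Unset Printing Implicit Defensive.

(* Fix K with n < 2^K and a shift s < 2^K, and lay the key x at position x + s
   of the complete binary tree on the positions 1, ..., 2^(K+1) - 1.  Two keys
   a <= b are separated only at the levels J for which [a + s, b + s] contains a
   multiple of 2^J, and each such level costs at most two edges.  Over all
   shifts, level J separates a and b at most min(2^K, (b - a + 1) 2^(K-J))
   times, so the average distance is O(log (b - a)).  Hence, term by term,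
   some shift has l-DistTree at most 9 times the sum of the logarithms in UB, and an optimal tree does no worse. *)

Fixpoint height (t : tree) : nat :=
  if t is Node l _ r then (maxn (height l) (height r)).+1 else 0.

Lemma size_anc_le_height t a : size (anc t a) <= height t.
Proof.
elim: t => [|l IHl k r IHr] //=.
case: eqP => _ /=; first lia.
case: ifP => _ /=; first by move: IHl; lia.
by case: ifP => _ /=; first by move: IHr; lia.
Qed.

Lemma dT_le_height t a b : dT t a b <= 2 * height t.
Proof. by rewrite /dT; move: (size_anc_le_height t a) (size_anc_le_height t b); lia. Qed.

Lemma dT_Node_l l k r a b : uniq (inorder (Node l k r)) ->
  a \in inorder l -> b \in inorder l -> dT (Node l k r) a b = dT l a b.
Proof.
rewrite /= cat_uniq /= => /and3P [_ /norP [k_l _] _] a_l b_l.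
have [ka kb] : k != a /\ k != b by split; apply: contraNneq k_l => ->.
by rewrite /dT /= (negbTE ka) (negbTE kb) a_l b_l /= eqxx; lia.
Qed.

Lemma dT_Node_r l k r a b : uniq (inorder (Node l k r)) ->
  a \in inorder r -> b \in inorder r -> dT (Node l k r) a b = dT r a b.
Proof.
rewrite /= cat_uniq /= => /and3P [_ /norP [_ /hasPn l_r] /andP [k_r _]] a_r b_r.
have [ka kb] : k != a /\ k != b by split; apply: contraNneq k_r => ->.
rewrite /dT /= (negbTE ka) (negbTE kb) (negbTE (l_r a a_r)) (negbTE (l_r b b_r)).
by rewrite a_r b_r /= eqxx; lia.
Qed.

Section DyadicTree.

Variables s n : nat.

(* The complete binary tree on the positions base+1, ..., base+2^j-1, rooted at
   base+2^(j-1), in which position p carries the key p - s and only the keys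
   1, ..., n are kept. *)
Fixpoint dyadic_tree (j base : nat) : tree :=
  if j is j'.+1 then
    let p := base + 2 ^ j' in
    if s < p <= n + s then Node (dyadic_tree j' base) (p - s) (dyadic_tree j' p)
    else if p <= s then dyadic_tree j' p else dyadic_tree j' base
  else Leaf.

Lemma mem_dyadic_tree j base x :
  (x \in inorder (dyadic_tree j base)) =
  [&& 0 < x, x <= n, base < x + s & x + s < base + 2 ^ j].
Proof.
elim: j base => [|j IHj] base /=; first by rewrite expn0 in_nil; lia.
have : 0 < 2 ^ j by rewrite expn_gt0.
rewrite expnS; case: ifP => root_in; first by rewrite mem_cat inE !IHj; lia.
by case: ifP => root_le; rewrite IHj; lia.
Qed.

Lemma height_dyadic_tree j base : height (dyadic_tree j base) <= j.
Proof.
elim: j base => [|j IHj] base //=.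
case: ifP => _ /=; first by move: (IHj base) (IHj (base + 2 ^ j)); lia.
by case: ifP => _; [move: (IHj (base + 2 ^ j)) | move: (IHj base)]; lia.
Qed.

Lemma pairwise_dyadic_tree j base : pairwise ltn (inorder (dyadic_tree j base)).
Proof.
elim: j base => [|j IHj] base //=.
case: ifP => root_in; last by case: ifP.
have : 0 < 2 ^ j by rewrite expn_gt0.
rewrite pairwise_cat /= !IHj andbT /= => pos; apply/andP; split.
- apply/allrelP => x y; rewrite inE !mem_dyadic_tree => ? /orP [/eqP ->|] /=; lia.
- by apply/allP => y; rewrite mem_dyadic_tree /=; lia.
Qed.

Lemma uniq_dyadic_tree j base : uniq (inorder (dyadic_tree j base)).
Proof. exact/(sorted_uniq ltn_trans ltnn)/pairwise_sorted/pairwise_dyadic_tree. Qed.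

Lemma is_bst_on_dyadic_tree K : n < 2 ^ K -> s < 2 ^ K -> is_bst_on n (dyadic_tree K.+1 0).
Proof.
move=> n_lt s_lt; apply: (irr_sorted_eq ltn_trans ltnn).
- exact/pairwise_sorted/pairwise_dyadic_tree.
- exact: iota_ltn_sorted.
- by move=> x; rewrite mem_dyadic_tree mem_iota expnS; lia.
Qed.

Definition splits (a b J : nat) : bool :=
  has (dvdn (2 ^ J)) (iota (minn a b + s) (absdiff a b).+1).

Lemma splits_le a b J J' : J <= J' -> splits a b J' -> splits a b J.
Proof.
move=> le_JJ' /hasP [q q_in dvd_q]; apply/hasP; exists q => //.
by apply: dvdn_trans dvd_q; rewrite dvdn_exp2l.
Qed.

(* If the root's position lies in [min a b + s, max a b + s], every lower level
   splits as well and the height bound suffices; otherwise a and b lie in the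
   same subtree. *)
Lemma dT_dyadic_tree_le j base a b : 2 ^ j %| base ->
  a \in inorder (dyadic_tree j base) -> b \in inorder (dyadic_tree j base) ->
  dT (dyadic_tree j base) a b <= 2 * \sum_(0 <= J < j) splits a b J.
Proof.
elim: j base => [|j IHj] base dvd_base a_in b_in.
  by move: a_in; rewrite mem_dyadic_tree expn0; lia.
have -> : \sum_(0 <= J < j.+1) splits a b J = \sum_(0 <= J < j) splits a b J + splits a b j.
  by rewrite big_nat_recr.
have [split_j|nsplit_j] := boolP (splits a b j).
  have -> : \sum_(0 <= J < j) splits a b J = j.
    rewrite (eq_big_nat _ _ (F2 := fun => 1)) ?sum_nat_const_nat ?muln1 ?subn0 //.
    by move=> J /andP [_ lt_Jj]; rewrite (splits_le (ltnW lt_Jj) split_j).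
  have := dT_le_height (dyadic_tree j.+1 base) a b.
  by have := height_dyadic_tree j.+1 base; lia.
rewrite addn0.
have dvd_l : 2 ^ j %| base by apply: dvdn_trans dvd_base; rewrite dvdn_exp2l.
have dvd_r : 2 ^ j %| base + 2 ^ j by rewrite dvdn_add.
have root_out : base + 2 ^ j \notin iota (minn a b + s) (absdiff a b).+1.
  by apply: contra nsplit_j => root_in; apply/hasP; exists (base + 2 ^ j).
have : 0 < 2 ^ j by rewrite expn_gt0.
move: (a_in) (b_in) root_out; rewrite !mem_dyadic_tree mem_iota expnS /absdiff.
move=> a_rng b_rng root_out pos; move: a_in b_in => /=.
case: ifP => root_in; last by case: ifP => _ a_in b_in; exact: IHj.
move=> a_in b_in; have := uniq_dyadic_tree j.+1 base; rewrite /= root_in => uniq_t.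
have [a_lt|a_ge] := ltnP (a + s) (base + 2 ^ j).
- rewrite dT_Node_l // ?mem_dyadic_tree; try lia.
  by apply: IHj; rewrite ?mem_dyadic_tree //; lia.
- rewrite dT_Node_r // ?mem_dyadic_tree; try lia.
  by apply: IHj; rewrite ?mem_dyadic_tree //; lia.
Qed.

End DyadicTree.

Lemma leq_sum_nat m k (F G : nat -> nat) :
  (forall i, m <= i < k -> F i <= G i) ->
  \sum_(m <= i < k) F i <= \sum_(m <= i < k) G i.
Proof.
move=> le_FG; rewrite big_nat_cond [leqRHS]big_nat_cond.
by apply: leq_sum => i /andP [i_in _]; apply: le_FG.
Qed.

Lemma count_iota (p : pred nat) y w : count p (iota y w) = \sum_(0 <= i < w) p (y + i).
Proof.
elim: w y => [|w IHw] y; first by rewrite big_geq.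
rewrite big_nat_recl //= IHw addn0.
by under eq_bigr do rewrite addSnnS.
Qed.

Lemma sum_dvdn_mul d q : 0 < d -> \sum_(0 <= i < q * d) (d %| i) = q.
Proof.
move=> d_gt0; elim: q => [|q IHq]; first by rewrite mul0n big_geq.
rewrite mulSn addnC (@big_cat_nat _ _ _ (q * d)) //= ?IHq; last lia.
rewrite big_ltn ?dvdn_mull //; last lia.
rewrite big_nat_cond big1 ?addn0 ?addn1 // => i /andP [/andP [lt_i i_lt] _].
suff -> : (d %| i) = false by [].
rewrite -(subnKC (ltnW lt_i)) dvdn_addr ?dvdn_mull //.
by apply/negP => /dvdn_leq; lia.
Qed.

Lemma sum_dvdn_shift d q x : 0 < d -> \sum_(0 <= i < q * d) (d %| x + i) = q.
Proof.
move=> d_gt0; elim: x => [|x IHx]; first exact: sum_dvdn_mul.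
have period : (d %| x + q * d) = (d %| x) by rewrite dvdn_addl ?dvdn_mull.
have ends : (d %| x + 0) + \sum_(0 <= i < q * d) (d %| x.+1 + i) =
            \sum_(0 <= i < q * d) (d %| x + i) + (d %| x + q * d).
  rewrite -big_nat_recr // big_nat_recl //.
  by under eq_bigr do rewrite addSnnS.
by move: ends; rewrite addn0 period IHx; lia.
Qed.

Lemma sum_splits_le K a b J : J <= K ->
  \sum_(0 <= s < 2 ^ K) splits s a b J <= (absdiff a b).+1 * 2 ^ (K - J).
Proof.
move=> le_JK; set w := (absdiff a b).+1; set c := minn a b.
have pos : 0 < 2 ^ J by rewrite expn_gt0.
have splits_le_count s : splits s a b J <= \sum_(0 <= i < w) (2 ^ J %| c + i + s).
  rewrite /splits has_count count_iota.
  under eq_bigr do rewrite addnAC.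
  by case: (\sum_(0 <= i < w) _).
apply: leq_trans (leq_sum_nat (fun s _ => splits_le_count s)) _.
rewrite exchange_big_nat /= -(subnK le_JK) expnD.
under eq_bigr do rewrite sum_dvdn_shift //.
by rewrite sum_nat_const_nat subn0 subnK.
Qed.

Lemma sum_expn2 k : \sum_(0 <= i < k) 2 ^ i = (2 ^ k).-1.
Proof.
elim: k => [|k IHk]; first by rewrite big_geq.
have : 0 < 2 ^ k by rewrite expn_gt0.
by rewrite big_nat_recr //= IHk expnS; lia.
Qed.

(* Levels J < e may split for every shift; above e the splitting shifts halve
   with each level, so those levels contribute a geometric series. *)
Lemma sum_levels_le K e w : w <= 2 ^ e ->
  \sum_(0 <= J < K.+1) minn (2 ^ K) (w * 2 ^ (K - J)) <= 2 ^ K * (e + 2).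
Proof.
move=> w_le; have [le_Ke|lt_eK] := leqP K.+1 e.
  apply: leq_trans (leq_sum_nat (G := fun => 2 ^ K) (fun J _ => geq_minl _ _)) _.
  by rewrite sum_nat_const_nat subn0 mulnC leq_mul2l; lia.
rewrite (@big_cat_nat _ _ _ e) //=; last exact: ltnW.
have low : \sum_(0 <= J < e) minn (2 ^ K) (w * 2 ^ (K - J)) <= e * 2 ^ K.
  apply: leq_trans (leq_sum_nat (G := fun => 2 ^ K) (fun J _ => geq_minl _ _)) _.
  by rewrite sum_nat_const_nat subn0.
have high : \sum_(e <= J < K.+1) minn (2 ^ K) (w * 2 ^ (K - J)) <= \sum_(0 <= J < K.+1) 2 ^ J.
  rewrite big_nat_rev /= (@big_cat_nat _ _ _ e 0 K.+1) //=; last exact: ltnW.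
  apply: leq_trans (leq_addl _ _); apply: leq_sum_nat => J /andP [le_eJ lt_JK].
  apply: leq_trans (geq_minr _ _) _; apply: leq_trans (leq_mul w_le (leqnn _)) _.
  by rewrite -expnD leq_exp2l //; lia.
have : 0 < 2 ^ K by rewrite expn_gt0.
by move: high; rewrite sum_expn2 expnS mulnDr mulnC; lia.
Qed.

Lemma sum_dT_dyadic_tree_le n K a b e : n < 2 ^ K -> 0 < a <= n -> 0 < b <= n ->
  (absdiff a b).+1 <= 2 ^ e ->
  \sum_(0 <= s < 2 ^ K) dT (dyadic_tree s n K.+1 0) a b <= 2 ^ K * (2 * (e + 2)).
Proof.
move=> n_lt a_rng b_rng w_le.
apply: (@leq_trans (\sum_(0 <= s < 2 ^ K) 2 * \sum_(0 <= J < K.+1) splits s a b J)).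
  apply: leq_sum_nat => s /andP [_ s_lt].
  by apply: dT_dyadic_tree_le; rewrite ?dvdn0 ?mem_dyadic_tree ?expnS; lia.
rewrite -big_distrr /= exchange_big_nat /= mulnCA leq_mul2l /=.
apply: leq_trans (sum_levels_le K w_le); apply: leq_sum_nat => J /andP [_ lt_JK].
rewrite leq_min sum_splits_le ?andbT; last lia.
apply: leq_trans (leq_sum_nat (G := fun => 1) (fun s _ => leq_b1 _)) _.
by rewrite sum_nat_const_nat subn0 muln1.
Qed.

Definition lg (x : nat) : nat := trunc_log 2 (maxn 2 x).

Lemma lg_gt0 x : 0 < lg x.
Proof. by rewrite /lg trunc_log_gt0; lia. Qed.

Lemma ltn_expn_lg x : x < 2 ^ (lg x).+1.
Proof. by apply: leq_trans (trunc_log_ltn _ _) => //; lia. Qed.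

Lemma leq_lg x y : x <= y -> lg x <= lg y.
Proof. by move=> le_xy; apply: leq_trunc_log; lia. Qed.

Lemma INR_expn m k : INR (m ^ k) = pow (INR m) k.
Proof. by elim: k => [|k IHk] //; rewrite expnS mult_INR IHk. Qed.

Lemma ln_le x y : Rlt 0 x -> Rle x y -> Rle (ln x) (ln y).
Proof.
move=> x_gt0 /Rle_lt_or_eq_dec [lt_xy|->]; last exact: Rle_refl.
by apply: Rlt_le; apply: ln_increasing.
Qed.

Lemma INR_lg_le_logm x : Rle (INR (lg x)) (logm (INR x)).
Proof.
have ln2_gt0 : Rlt 0 (ln (INR 2)) by rewrite -ln_1; apply: ln_increasing; simpl; lra.
have pow_le : 2 ^ lg x <= maxn 2 x by apply: trunc_logP; lia.
have max_le : Rle (INR (maxn 2 x)) (Rmax (INR 2) (INR x)).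
  by rewrite /maxn; case: ifP => _; [apply: Rmax_r | apply: Rmax_l].
apply: (Rmult_le_reg_r (ln (INR 2))) => //.
rewrite /logm /Rdiv Rmult_assoc Rinv_l ?Rmult_1_r; last lra.
rewrite -ln_pow -?INR_expn; last by simpl; lra.
apply: ln_le; first by apply: lt_0_INR; apply/ltP; rewrite expn_gt0.
exact: Rle_trans (le_INR _ _ (elimT leP pow_le)) max_le.
Qed.

Lemma sum_dist_dyadic_tree_le n K a b : n < 2 ^ K -> 0 < a <= n -> 0 < b <= n ->
  \sum_(0 <= s < 2 ^ K) (dT (dyadic_tree s n K.+1 0) a b).+1 <= 2 ^ K * (9 * lg (absdiff a b)).
Proof.
move=> n_lt a_rng b_rng.
have := sum_dT_dyadic_tree_le n_lt a_rng b_rng (ltn_expn_lg (absdiff a b)).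
have := lg_gt0 (absdiff a b).
have -> : \sum_(0 <= s < 2 ^ K) (dT (dyadic_tree s n K.+1 0) a b).+1 =
          \sum_(0 <= s < 2 ^ K) dT (dyadic_tree s n K.+1 0) a b + 2 ^ K.
  rewrite (eq_bigr (fun s => dT (dyadic_tree s n K.+1 0) a b + 1)) => [|s _]; last exact/esym/addn1.
  by rewrite big_split /= sum_nat_const_nat subn0 muln1.
nia.
Qed.

Lemma foldr_map_closed (I : eqType) (T : Type) (P : T -> Prop) (op : T -> T -> T)
    (f : I -> T) h (s : seq I) :
  (forall x y, P x -> P y -> P (op x y)) -> P h -> (forall i, i \in s -> P (f i)) ->
  P (foldr op h (map f s)).
Proof.
move=> P_op P_h; elim: s => [|i s IHs] //= P_s.
apply: P_op; first by apply: P_s; rewrite mem_head.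
by apply: IHs => j j_s; apply: P_s; rewrite inE j_s orbT.
Qed.

Lemma nmin_le (s : seq nat) x : x \in s -> nmin s <= x.
Proof.
rewrite /nmin; elim: s (head 0 s) => [|y s IHs] h //=.
rewrite inE => /orP [/eqP ->|/(IHs h) le_x]; first exact: geq_minl.
exact: leq_trans (geq_minr _ _) le_x.
Qed.

Lemma nmin_map_attained (I : eqType) (f : I -> nat) (s : seq I) : s != [::] ->
  exists2 i, i \in s & nmin (map f s) = f i.
Proof.
case: s => [|i0 s] // _; rewrite /nmin.
apply: (foldr_map_closed (P := fun r => exists2 i, i \in i0 :: s & r = f i)).
- move=> _ _ [i i_s ->] [j j_s ->]; case: (leqP (f i) (f j)) => [le_ij|/ltnW le_ji].
  + by exists i => //; apply/esym/minn_idPl.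
  + by exists j => //; apply/esym/minn_idPr.
- by exists i0; rewrite ?mem_head.
- by move=> i i_s; exists i.
Qed.

Lemma rmin_map_attained (I : eqType) (f : I -> R) (s : seq I) : s != [::] ->
  exists2 i, i \in s & rmin (map f s) = f i.
Proof.
case: s => [|i0 s] // _; rewrite /rmin.
apply: (foldr_map_closed (P := fun r => exists2 i, i \in i0 :: s & r = f i)).
- by move=> x y; apply: (@Rmin_case x y (fun r => exists2 i, i \in i0 :: s & r = f i)).
- by exists i0; rewrite ?mem_head.
- by move=> i i_s; exists i.
Qed.

Lemma INR_nmin_le_rmin (I : eqType) (f : I -> nat) (g : I -> R) (s : seq I) :
  (forall i, i \in s -> Rle (INR (f i)) (g i)) -> Rle (INR (nmin (map f s))) (rmin (map g s)).
Proof.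
have [->|s_nz] := eqVneq s [::]; first by move=> _; apply: Rle_refl.
move=> le_fg; have [i i_s ->] := rmin_map_attained g s_nz.
apply: Rle_trans (le_fg i i_s); apply: le_INR; apply/leP.
exact/nmin_le/map_f.
Qed.

Lemma exists_le_average (f : nat -> nat) N B :
  \sum_(0 <= s < N) f s <= N * B -> 0 < N -> exists2 s, s < N & f s <= B.
Proof.
move=> sum_le N_gt0.
have [/hasP [s]|/hasPn all_gt] := boolP (has (fun s => f s <= B) (iota 0 N)).
  by rewrite mem_iota => s_lt le_B; exists s.
have : \sum_(0 <= s < N) B.+1 <= \sum_(0 <= s < N) f s.
  by apply: leq_sum_nat => s s_lt; rewrite ltnNge all_gt // mem_iota.
by rewrite sum_nat_const_nat subn0; lia.
Qed.

Lemma exists_minimizer (A : Type) (P : A -> Prop) (D : A -> nat) a : P a ->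
  exists2 b, P b & forall b', P b' -> D b <= D b'.
Proof.
move=> P_a; have [k [[[b [P_b <-]] least] _]] :=
  dec_inh_nat_subset_has_unique_least_element (fun k => exists b, P b /\ D b = k)
    (fun k => classic _) (ex_intro _ (D a) (ex_intro _ a (conj P_a erefl))).
by exists b => // b' P_b'; apply/leP; apply: least; exists b'.
Qed.

Definition lgUB (l n : nat) (X : seq nat) : nat :=
  \sum_(1 <= t < (size X).+1)
    (if t == 1 then lg n
     else nmin [seq lg (absdiff (acc X t) (acc X t') + rho X t (acc X t'))
               | t' <- iota (maxn 1 (t - l)) (t - maxn 1 (t - l))]).

Lemma INR_lgUB_le_UB l n X : Rle (INR (lgUB l n X)) (UB l n X).
Proof.
rewrite /lgUB /UB; apply: (big_rec2 (fun x y => Rle (INR x) y)); first exact: Rle_refl.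
move=> t x y _ le_xy; rewrite plus_INR; apply: Rplus_le_compat => //.
case: eqP => _; first exact: INR_lg_le_logm.
by apply: INR_nmin_le_rmin => t' _; apply: INR_lg_le_logm.
Qed.

Lemma sum_DistTree_dyadic_tree_le l n X : 0 < l -> all (fun x => (1 <= x) && (x <= n)) X ->
  \sum_(0 <= s < 2 ^ (lg n).+1) DistTree l (dyadic_tree s n (lg n).+2 0) X
    <= 2 ^ (lg n).+1 * (9 * lgUB l n X).
Proof.
move=> l_gt0 /allP X_rng; set K := (lg n).+1.
have n_lt : n < 2 ^ K := ltn_expn_lg n.
have acc_rng i : 0 < i <= size X -> 0 < acc X i <= n.
  move=> i_rng; have i_lt : i.-1 < size X by lia.
  exact: X_rng _ (mem_nth 0 i_lt).
rewrite /DistTree /lgUB exchange_big_nat /= 2!big_distrr /=.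
apply: leq_sum_nat => i /andP [i_gt0 i_le].
case: eqP => [->|/eqP i_neq1].
- have root_in : 0 \in iota (1 - l) (1 - (1 - l)) by rewrite mem_iota; lia.
  apply: leq_trans (leq_sum_nat (G := fun => (2 * K.+1).+1) _) _.
    move=> s _; apply: leq_trans (nmin_le (map_f _ root_in)) _.
    rewrite ltnS; apply: leq_trans (dT_le_height _ _ _) _.
    by rewrite leq_mul2l; apply: (height_dyadic_tree s n K.+1 0).
  by rewrite sum_nat_const_nat subn0 leq_mul2l; have := lg_gt0 n; lia.
have window_nz : iota (maxn 1 (i - l)) (i - maxn 1 (i - l)) != [::].
  by rewrite -size_eq0 size_iota; lia.
have [t t_in ->] := nmin_map_attained
  (fun t => lg (absdiff (acc X i) (acc X t) + rho X i (acc X t))) window_nz.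
move: (t_in); rewrite mem_iota => t_rng.
have t_in' : t \in iota (i - l) (i - (i - l)) by rewrite mem_iota; lia.
apply: leq_trans (leq_sum_nat
  (G := fun s => (dT (dyadic_tree s n K.+1 0) (acc X i) (acc X t)).+1) _) _.
  move=> s _; apply: leq_trans (nmin_le (map_f _ t_in')) _.
  have [i_nz t_nz] : i != 0 /\ t != 0 by split; lia.
  by rewrite /Defs.xt (negbTE i_nz) (negbTE t_nz).
apply: leq_trans (sum_dist_dyadic_tree_le n_lt (acc_rng i _) (acc_rng t _)) _; try lia.
by rewrite !leq_mul2l leq_lg ?leq_addr ?orbT.
Qed.

Theorem lemma8 :
  exists c : R, Rlt R0 c /\
    forall (l n m : nat) (X : seq nat),
      1 <= l -> n <= m -> size X = m ->
      all (fun x => (1 <= x) && (x <= n)) X ->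
      exists T : tree, is_bst_on n T /\
        (forall T' : tree, is_bst_on n T' -> DistTree l T X <= DistTree l T' X) /\
        Rle (INR (DistTree l T X)) (Rmult c (UB l n X)).
Proof.
exists (INR 9); split; first by apply: lt_0_INR; apply/ltP.
move=> l n m X l_gt0 _ _ X_rng.
have [s s_lt good_s] := exists_le_average
  (sum_DistTree_dyadic_tree_le l_gt0 X_rng) (expn_gt0 2 (lg n).+1).
have bst_s := is_bst_on_dyadic_tree (ltn_expn_lg n) s_lt.
have [T bst_T opt_T] := exists_minimizer (fun T => DistTree l T X) bst_s.
exists T; split => //; split => //.
apply: Rle_trans (Rmult_le_compat_l _ _ _ (pos_INR 9) (INR_lgUB_le_UB l n X)).
rewrite -mult_INR; apply/le_INR/leP.
exact: leq_trans (opt_T _ bst_s) good_s.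
Qed.
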